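(* Let $(G,+)$ be a group and let $(G,+,* )$ and $(G,+,\odot)$ be interchange near rings with underlying group $(G,+)$. Define $\varepsilon_*(x)=x*0$, $\eta_*(x)=0*x$, $\varepsilon_\odot(x)=x\odot 0$, $\eta_\odot(x)=0\odot x$. Then $(G,+,* )\cong(G,+,\odot)$ (as interchange near rings) if and only if the pairs $(\varepsilon_*,\eta_* )$ and $(\varepsilon_\odot,\eta_\odot)$ are similar, i.e. there exists $\alpha\in\mathrm{Aut}(G,+)$ with $\alpha^{-1}\varepsilon_*\alpha = \varepsilon_\odot$ and $\alpha^{-1}\eta_*\alpha = \eta_\odot$.
   Context: An interchange near ring is a triple $(G,+,\bullet)$ where $(G,+)$ is a group (written additively, not necessarily abelian, identity $0$) and $\bullet$ is a binary operation on $G$ satisfying the interchange law $(w+x)\bullet(y+z) = (w\bullet y)+(x\bullet z)$ for all $w,x,y,z\in G$. An isomorphism of interchange near rings $(G_1,+_1,\bullet_1)\to(G_2,+_2,\bullet_2)$ is a bijective group homomorphism $\varphi$ with $\varphi(x\bullet_1 y)=\varphi(x)\bullet_2\varphi(y)$ for all $x,y$. Composition of maps is written $\alpha\beta = \alpha\circ\beta$. *)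

Set Implicit Arguments.

Record is_group (G : Type) (add : G -> G -> G) (zero : G) (neg : G -> G) : Prop := {
  grp_assoc : forall x y z, add x (add y z) = add (add x y) z;
  grp_id_l : forall x, add zero x = x;
  grp_id_r : forall x, add x zero = x;
  grp_inv_l : forall x, add (neg x) x = zero;
  grp_inv_r : forall x, add x (neg x) = zero
}.

Definition interchange (G : Type) (add : G -> G -> G) (bullet : G -> G -> G) : Prop :=
  forall w x y z, bullet (add w x) (add y z) = add (bullet w y) (bullet x z).

Definition interchange_near_ring (G : Type) (add : G -> G -> G) (zero : G)
  (neg : G -> G) (bullet : G -> G -> G) : Prop :=
  is_group add zero neg /\ interchange add bullet.

Definition group_hom (G : Type) (add : G -> G -> G) (f : G -> G) : Prop :=
  forall x y, f (add x y) = add (f x) (f y).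

Definition bijective_fun (G : Type) (f : G -> G) : Prop :=
  (forall x y, f x = f y -> x = y) /\ (forall y, exists x, f x = y).

Definition inr_isomorphic (G : Type) (add : G -> G -> G) (b1 b2 : G -> G -> G) : Prop :=
  exists phi : G -> G, bijective_fun phi /\ group_hom add phi /\
    (forall x y, phi (b1 x y) = b2 (phi x) (phi y)).

Definition similar_pairs (G : Type) (add : G -> G -> G)
  (e1 h1 e2 h2 : G -> G) : Prop :=
  exists alpha alpha_inv : G -> G,
    group_hom add alpha /\
    (forall x, alpha_inv (alpha x) = x) /\ (forall x, alpha (alpha_inv x) = x) /\
    (forall x, alpha_inv (e1 (alpha x)) = e2 x) /\
    (forall x, alpha_inv (h1 (alpha x)) = h2 x).

From Stdlib Require Import ClassicalEpsilon.

Set Implicit Arguments.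

(* In an interchange near ring every product splits as
     x • y = (x • 0) + (0 • y),
   (interchange law applied to (x + 0) • (0 + y)), so the operation • is
   determined by the pair of maps (x ↦ x • 0, x ↦ 0 • x).
   - If φ is an isomorphism from (G, +, star) to (G, +, ⊙), then φ(0) = 0, hence
     φ(x star 0) = φ x ⊙ 0 and φ(0 star x) = 0 ⊙ φ x; so α := φ⁻¹ conjugates
     (ε_star, η_star) into (ε_⊙, η_⊙).
   - Conversely, if α ∈ Aut(G,+) conjugates the pairs, then by the splitting
     formula α⁻¹ is multiplicative from star to ⊙, hence an isomorphism. *)

Section Elementary.

Variables (G : Type) (add : G -> G -> G) (zero : G) (neg : G -> G).
Hypothesis Hgroup : is_group add zero neg.

Lemma interchange_split {b : G -> G -> G} :
  interchange add b -> forall x y, b x y = add (b x zero) (b zero y).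
Proof.
  intros Hb x y.
  rewrite <- Hb.
  now rewrite (grp_id_r Hgroup), (grp_id_l Hgroup).
Qed.

(* A group endomorphism fixes 0: f 0 is idempotent, hence 0 after cancellation. *)
Lemma group_hom_zero {f : G -> G} : group_hom add f -> f zero = zero.
Proof.
  intros Hf.
  assert (Hidem : add (f zero) (f zero) = f zero)
    by (rewrite <- Hf; now rewrite (grp_id_l Hgroup)).
  transitivity (add (add (neg (f zero)) (f zero)) (f zero)).
  - now rewrite (grp_inv_l Hgroup), (grp_id_l Hgroup).
  - now rewrite <- (grp_assoc Hgroup), Hidem, (grp_inv_l Hgroup).
Qed.

End Elementary.

Lemma inverse_group_hom {G : Type} {add : G -> G -> G} {a b : G -> G} :
  group_hom add a -> (forall x, b (a x) = x) -> (forall x, a (b x) = x) ->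
  group_hom add b.
Proof.
  intros Ha Hba Hab x y.
  rewrite <- (Hab x), <- (Hab y), <- Ha, !Hba.
  reflexivity.
Qed.

Lemma bijective_of_inverse {G : Type} {a b : G -> G} :
  (forall x, b (a x) = x) -> (forall x, a (b x) = x) -> bijective_fun b.
Proof.
  intros Hba Hab. split.
  - intros x y Exy. now rewrite <- (Hab x), <- (Hab y), Exy.
  - intros y. now exists (a y).
Qed.

Lemma bijective_inverse {G : Type} {f : G -> G} :
  bijective_fun f ->
  exists g : G -> G, (forall x, g (f x) = x) /\ (forall y, f (g y) = y).
Proof.
  intros [Hinj Hsurj].
  exists (fun y => proj1_sig (constructive_indefinite_description _ (Hsurj y))).
  assert (Hfg : forall y,
    f (proj1_sig (constructive_indefinite_description _ (Hsurj y))) = y)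
    by (intros y; now destruct constructive_indefinite_description).
  split; [intros x; apply Hinj|]; apply Hfg.
Qed.

(* Isomorphic interchange near rings have similar pairs (ε, η): the inverse
   of an isomorphism conjugates them. *)
Lemma isomorphic_similar (G : Type) (add : G -> G -> G) (zero : G) (neg : G -> G)
  (b1 b2 : G -> G -> G) :
  is_group add zero neg ->
  inr_isomorphic add b1 b2 ->
  similar_pairs add (fun x => b1 x zero) (fun x => b1 zero x)
                    (fun x => b2 x zero) (fun x => b2 zero x).
Proof.
  intros Hgroup [phi [Hbij [Hhom Hmul]]].
  destruct (bijective_inverse Hbij) as [psi [Hpsiphi Hphipsi]].
  assert (Hphi0 : phi zero = zero) by exact (group_hom_zero Hgroup Hhom).
  exists psi, phi.
  repeat split; auto.
  - exact (inverse_group_hom Hhom Hpsiphi Hphipsi).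
  - intros x. now rewrite Hmul, Hphi0, Hphipsi.
  - intros x. now rewrite Hmul, Hphi0, Hphipsi.
Qed.

(* Similar pairs (ε, η) give isomorphic interchange near rings: by the
   splitting formula, the inverse of the conjugating automorphism is
   multiplicative. *)
Lemma similar_isomorphic (G : Type) (add : G -> G -> G) (zero : G) (neg : G -> G)
  (b1 b2 : G -> G -> G) :
  interchange_near_ring add zero neg b1 ->
  interchange_near_ring add zero neg b2 ->
  similar_pairs add (fun x => b1 x zero) (fun x => b1 zero x)
                    (fun x => b2 x zero) (fun x => b2 zero x) ->
  inr_isomorphic add b1 b2.
Proof.
  intros [Hgroup Hb1] [_ Hb2] [alpha [beta [Hhom [Hba [Hab [Heps Heta]]]]]].
  assert (Hbeta : group_hom add beta) by exact (inverse_group_hom Hhom Hba Hab).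
  exists beta. split; [|split]; [exact (bijective_of_inverse Hba Hab) | exact Hbeta |].
  intros x y.
  rewrite (interchange_split Hgroup Hb1), (interchange_split Hgroup Hb2).
  rewrite Hbeta, <- Heps, <- Heta, !Hab.
  reflexivity.
Qed.

Theorem theorem3p5 (G : Type) (add : G -> G -> G) (zero : G) (neg : G -> G)
  (star odot : G -> G -> G)
  (Hstar : interchange_near_ring add zero neg star)
  (Hodot : interchange_near_ring add zero neg odot) :
  inr_isomorphic add star odot <->
  similar_pairs add (fun x => star x zero) (fun x => star zero x)
                    (fun x => odot x zero) (fun x => odot zero x).
Proof.
  split.
  - exact (isomorphic_similar (proj1 Hstar)).
  - exact (similar_isomorphic Hstar Hodot).
Qed.
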